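(* Let $\mathcal{P}$ be the set of sequences $\boldsymbol{b}=(b_k)_{k\geq1}$ with $b_k\in\{0,1,2,3\}$ such that $b_k=g_k$ for all but finitely many $k$, where $g_k=3$ for $k$ odd and $g_k=0$ for $k$ even. Let $H(a,b)=\max(a-3,-b)$ for $a,b\in\{0,1,2,3\}$, and for $\boldsymbol{b}\in\mathcal{P}$ put \[ \ell_H(\boldsymbol{b})=\sum_{k\geq1}\big(H(b_{k+1},b_k)-H(g_{k+1},g_k)\big),\qquad \ell(\boldsymbol{b})=2\ell_H(\boldsymbol{b})-(3-b_1), \] \[ |\boldsymbol{b}|=\sum_{k\geq1}(b_k-g_k)+2\sum_{k\geq1}k\big(H(b_{k+1},b_k)-H(g_{k+1},g_k)\big). \] Let $J(x,q)=\sum_{\boldsymbol{b}\in\mathcal{P}}x^{\ell(\boldsymbol{b})}q^{|\boldsymbol{b}|}$. Then \[ qJ(x,q) = (1+xq)(1+q-xq+x^2q^3)\,J(xq,q)-(1+xq^2)(1-x^2q^2)\,J(xq^{2},q). \]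
   Context: Here $\mathcal{P}$ is the Kyoto path realization of the $A^{(1)}_1$ highest weight crystal $B(3\Lambda_0)$ using the Kirillov–Reshetikhin perfect crystal $B^{1,3}=\{0,1,2,3\}$ (with $\tilde f_1: a\mapsto a+1$, $\tilde f_0:a\mapsto a-1$), whose ground-state path is $\cdots\otimes 0\otimes 3\otimes 0\otimes 3$; $|\boldsymbol{b}|\ge 0$ is the number of Kashiwara lowering operators needed to reach $\boldsymbol{b}$ from the ground-state path. $J$ is a formal power series in $q$ with Laurent polynomial coefficients in $x$. *)

From HB Require Import structures.
From mathcomp Require Import all_boot all_order all_algebra.
From mathcomp Require Import boolp classical_sets cardinality.
From mathcomp Require Import finmap.
Set Implicit Arguments. Unset Strict Implicit. Unset Printing Implicit Defensive.
Import Order.TTheory GRing.Theory Num.Theory.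
Local Open Scope ring_scope.
Local Open Scope classical_set_scope.

(* ground-state sequence: g_k = 3 for k odd, 0 for k even (g_0 = 0 is an
   unused padding slot, sequences are indexed from k = 1) *)
Definition g (k : nat) : nat := if odd k then 3%N else 0%N.

Definition H (a b : nat) : int := Num.max (a%:Z - 3) (- b%:Z).

(* P : sequences b = (b_k)_{k>=1} with b_k in {0,1,2,3}, equal to g_k for all
   but finitely many k.  Sequences are functions nat -> nat; the unused slot
   b 0 is normalised to g 0 = 0. *)
Definition inP (b : nat -> nat) : Prop :=
  (forall k, (b k <= 3)%N) /\ b 0%N = g 0%N /\
  exists N, forall k, (N <= k)%N -> b k = g k.

Definition tail_bound (b : nat -> nat) : nat :=
  xget 0%N [set N | forall k, (N <= k)%N -> b k = g k].

Definition dH (b : nat -> nat) (k : nat) : int :=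
  H (b k.+1) (b k) - H (g k.+1) (g k).

Definition ellH (b : nat -> nat) : int :=
  \sum_(1 <= k < tail_bound b) dH b k.

Definition ell (b : nat -> nat) : int := 2 * ellH b - (3 - (b 1%N)%:Z).

Definition absb (b : nat -> nat) : int :=
  \sum_(1 <= k < tail_bound b) ((b k)%:Z - (g k)%:Z)
  + 2 * \sum_(1 <= k < tail_bound b) (k%:Z * dH b k).

Definition Sset (m n : int) : set (nat -> nat) :=
  [set b | inP b /\ ell b = m /\ absb b = n].

(* coefficient of x^m q^n in J(x,q) = sum_{b in P} x^{ell b} q^{|b|} *)
Definition Jcoef (m n : int) : int := (#|` fset_set (Sset m n)|)%fset%:Z.

(* coefficient of x^m q^n in J(x q^a, q) = sum_b x^{ell b} q^{a ell b + |b|} *)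
Definition Jsub (a : int) (m n : int) : int := Jcoef m (n - a * m).

(* Laurent polynomials in x, q as lists of monomials (coef, x-exponent, q-exponent) *)
Definition lpoly := seq (int * int * int).
Definition lmul (p r : lpoly) : lpoly :=
  [seq (u.1.1 * v.1.1, u.1.2 + v.1.2, u.2 + v.2) | u <- p, v <- r].
(* coefficient of x^m q^n in p(x,q) * F, where F has coefficients F m n *)
Definition act (p : lpoly) (F : int -> int -> int) (m n : int) : int :=
  \sum_(t <- p) t.1.1 * F (m - t.1.2) (n - t.2).

Definition P_q : lpoly := [:: (1, 0, 1)].
Definition P_1xq : lpoly := [:: (1, 0, 0); (1, 1, 1)].
Definition P_2 : lpoly :=
  [:: (1, 0, 0); (1, 0, 1); (-1, 1, 1); (1, 2, 3)].
Definition P_1xq2 : lpoly := [:: (1, 0, 0); (1, 1, 2)].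
Definition P_1mx2q2 : lpoly := [:: (1, 0, 0); (-1, 2, 2)].

From mathcomp Require Import all_boot all_order all_algebra.
From mathcomp Require Import boolp classical_sets cardinality finmap.
From mathcomp Require Import ring zify.
Import GRing.Theory Num.Theory.
Set Implicit Arguments. Unset Strict Implicit. Unset Printing Implicit Defensive.
Local Open Scope ring_scope.
Local Open Scope classical_set_scope.

(* Every path is [pcons c b]: a first letter [c] followed by the complement
   [3 - b] of a path [b], shifted by one place (shifting and complementing [g]
   gives back [g]).  Since [H (3 - a) (3 - b) = H a b + b - a], this changes
   [ell] by [|c - b_1|] and [|b|] by [ell b + |c - b_1|].  Hence the part
   [J_c] of [J] whose paths start with [c] satisfies
   [J_c(x, q) = sum_c' (x q)^|c - c'| J_c'(x q, q)], and the same recursion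
   shows that a path agrees with [g] beyond [|b|], so each coefficient of [J]
   counts finitely many paths.  Unfolding the recursion twice writes
   [J(x, q)], [J(x q, q)] and [J(x q^2, q)] as combinations of the four series
   [J_e(x q^2, q)] with Laurent polynomial coefficients, and the functional
   equation becomes the vanishing of four explicit Laurent polynomials,
   checked by computation. *)

Definition agrees_from (N : nat) (b : nat -> nat) : Prop :=
  forall k, (N <= k)%N -> b k = g k.

Lemma agrees_fromW N M b : (N <= M)%N -> agrees_from N b -> agrees_from M b.
Proof. by move=> NM bN k Mk; apply: bN; apply: leq_trans Mk. Qed.

Lemma tail_boundP b : inP b -> agrees_from (tail_bound b) b.
Proof. by case=> _ [_ [N bN]]; exact: (@xgetI _ 0%N [set N | agrees_from N b] N). Qed.

Lemma inP_agrees b : inP b -> exists N, agrees_from N.+1 b.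
Proof. by move=> Pb; exists (tail_bound b); apply: agrees_fromW (tail_boundP Pb). Qed.

Lemma big_nat_vanishing_eq (V : nmodType) (u : nat -> V) N M :
  (forall k, (N <= k)%N -> u k = 0) -> (forall k, (M <= k)%N -> u k = 0) ->
  \sum_(1 <= k < N) u k = \sum_(1 <= k < M) u k.
Proof.
wlog NM : N M / (N <= M)%N.
  by move=> wlog uN uM; case: (leqP N M) => [|/ltnW] NM; last symmetry; apply: wlog.
move=> uN _; case: N NM uN => [|N] NM uN.
  by rewrite big_geq // big1_seq // => k _; apply: uN.
rewrite [RHS](big_cat_nat _ (n := N.+1)) //= [X in _ + X]big_nat_cond.
by rewrite [X in _ + X]big1 ?addr0 // => k /andP[/andP[Nk _] _]; apply: uN.
Qed.

Lemma sum_weighted_telescope (u : nat -> int) N :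
  \sum_(1 <= j < N.+1) (j.+1%:Z * (u j - u j.+1)) =
  \sum_(1 <= j < N.+1) u j + u 1%N - N.+1%:Z * u N.+1.
Proof.
have shift j : j.+1%:Z * (u j - u j.+1) = u j - (j.+1%:Z * u j.+1 - j%:Z * u j).
  by rewrite -addn1 PoszD; ring.
under eq_bigr do rewrite shift.
by rewrite sumrB telescope_sumr // mul1r; ring.
Qed.

Definition delta (b : nat -> nat) (k : nat) : int := (b k)%:Z - (g k)%:Z.

Lemma ellH_from N b : inP b -> agrees_from N b -> ellH b = \sum_(1 <= k < N) dH b k.
Proof.
move=> /tail_boundP bT bN; apply: big_nat_vanishing_eq => k Mk.
  by rewrite /dH !bT ?subrr // ltnW.
by rewrite /dH !bN ?subrr // ltnW.
Qed.

Lemma absb_from N b : inP b -> agrees_from N b ->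
  absb b = \sum_(1 <= k < N) delta b k + 2 * \sum_(1 <= k < N) (k%:Z * dH b k).
Proof.
move=> /tail_boundP bT bN; rewrite /absb.
congr (_ + 2 * _); apply: big_nat_vanishing_eq => k Mk.
- by rewrite bT ?subrr.
- by rewrite /delta bN ?subrr.
- by rewrite /dH !bT ?subrr ?mulr0 // ltnW.
- by rewrite /dH !bN ?subrr ?mulr0 // ltnW.
Qed.

Lemma g_succ j : g j.+1 = (3 - g j)%N.
Proof. by rewrite /g /=; case: (odd j). Qed.

Lemma g_le3 j : (g j <= 3)%N.
Proof. by rewrite /g; case: (odd j). Qed.

Lemma inP_g : inP g.
Proof. by split; [exact: g_le3 | split; last by exists 0%N]. Qed.

Lemma ell_g : ell g = 0.
Proof. by rewrite /ell (@ellH_from 1 g inP_g) ?big_geq. Qed.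

Lemma absb_g : absb g = 0.
Proof. by rewrite (@absb_from 1 g inP_g) ?big_geq. Qed.

Definition pcons (c : nat) (b : nat -> nat) (k : nat) : nat :=
  match k with 0 => 0 | 1 => c | j.+1 => 3 - b j end.

Definition ptail (b : nat -> nat) (k : nat) : nat :=
  match k with 0 => 0 | j.+1 => 3 - b j.+2 end.

Lemma pcons_agrees c b N : agrees_from N.+1 b -> agrees_from N.+2 (pcons c b).
Proof. by move=> bN [|[|j]] // ?; rewrite /= bN ?g_succ. Qed.

Lemma pcons_inP c b : (c <= 3)%N -> inP b -> inP (pcons c b).
Proof.
move=> c3 Pb; have [N bN] := inP_agrees Pb.
split; first by case=> [|[|j]] //=; rewrite leq_subr.
by split; last by exists N.+2; apply: pcons_agrees.
Qed.

Lemma ptail_agrees b N : agrees_from N.+1 b -> agrees_from N (ptail b).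
Proof. by move=> bN [|j] // ?; rewrite /= bN // g_succ subKn ?g_le3. Qed.

Lemma ptail_inP b : inP b -> inP (ptail b).
Proof.
move=> Pb; have [N bN] := inP_agrees Pb.
split; first by case=> [|j] //=; rewrite leq_subr.
by split; last by exists N; apply: ptail_agrees.
Qed.

Lemma pconsK b : inP b -> pcons (b 1%N) (ptail b) = b.
Proof. by case=> b3 [b0 _]; apply: funext => -[|[|j]] //=; rewrite subKn. Qed.

Lemma ptailK c b : inP b -> ptail (pcons c b) = b.
Proof. by case=> b3 [b0 _]; apply: funext => -[|j] //=; rewrite subKn. Qed.

Lemma inP_ind (Q : (nat -> nat) -> Prop) :
  Q g -> (forall c b, (c <= 3)%N -> inP b -> Q b -> Q (pcons c b)) ->
  forall b, inP b -> Q b.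
Proof.
move=> Qg Qcons b Pb; have [N] := inP_agrees Pb.
elim: N b Pb => [|N IH] b Pb bN.
  have -> : b = g by apply: funext => -[|k]; [case: Pb => _ [] | apply: bN].
  exact: Qg.
rewrite -(pconsK Pb); apply: Qcons; first by case: Pb.
  exact: ptail_inP.
by apply: IH; [exact: ptail_inP | exact: ptail_agrees].
Qed.

Definition dist (c c' : nat) : int := `|c%:Z - c'%:Z|.

Lemma H_compl a b : (a <= 3)%N -> (b <= 3)%N ->
  H (3 - a) (3 - b) = H a b + b%:Z - a%:Z.
Proof. by move: a b => [|[|[|[|a]]]] [|[|[|[|b]]]]. Qed.

Lemma H_head_dist c c' : (c <= 3)%N -> (c' <= 3)%N ->
  2 * (H (3 - c') c - H 0 3) + c%:Z + c'%:Z - 6 = dist c c'.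
Proof. by move: c c' => [|[|[|[|a]]]] [|[|[|[|b]]]]. Qed.

Section Prepend.
Variables (c : nat) (b : nat -> nat).
Hypotheses (c_le3 : (c <= 3)%N) (Pb : inP b).

Let b_le3 k : (b k <= 3)%N. Proof. by case: Pb. Qed.

Lemma dH_pcons j : (1 <= j)%N ->
  dH (pcons c b) j.+1 = dH b j - (delta b j.+1 - delta b j).
Proof.
case: j => [//|j] _; rewrite /dH /delta /= [g j.+3]g_succ [g j.+2]g_succ.
by rewrite !H_compl ?g_le3 ?leq_subr //; ring.
Qed.

Lemma delta_pcons j : (1 <= j)%N -> delta (pcons c b) j.+1 = - delta b j.
Proof.
case: j => [//|j] _; rewrite /delta /= g_succ.
by rewrite -!subzn ?g_le3 //; ring.
Qed.

Lemma ellH_pcons : ellH (pcons c b) = ellH b + dH (pcons c b) 1 + delta b 1%N.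
Proof.
have [N bN] := inP_agrees Pb.
have delta_end : delta b N.+1 = 0 by rewrite /delta bN ?subrr.
rewrite (ellH_from (pcons_inP c_le3 Pb) (pcons_agrees c bN)) (ellH_from Pb bN).
rewrite big_nat_recl //; under eq_big_nat => j /andP[j1 _] do rewrite dH_pcons //.
by rewrite sumrB telescope_sumr // delta_end; ring.
Qed.

Lemma absb_pcons_ellH : absb (pcons c b) =
  absb b + 2 * ellH b + 2 * dH (pcons c b) 1 + delta (pcons c b) 1 + 2 * delta b 1%N.
Proof.
have [N bN] := inP_agrees Pb.
have delta_end : delta b N.+1 = 0 by rewrite /delta bN ?subrr.
rewrite (absb_from (pcons_inP c_le3 Pb) (pcons_agrees c bN)) (absb_from Pb bN).
have sum_delta : \sum_(1 <= j < N.+1) delta (pcons c b) j.+1 = - \sum_(1 <= j < N.+1) delta b j.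
  by rewrite -sumrN; apply: eq_big_nat => j /andP[j1 _]; apply: delta_pcons.
have sum_dH : \sum_(1 <= j < N.+1) (j.+1%:Z * dH (pcons c b) j.+1) =
    \sum_(1 <= j < N.+1) (j%:Z * dH b j) + \sum_(1 <= j < N.+1) dH b j +
    \sum_(1 <= j < N.+1) (j.+1%:Z * (delta b j - delta b j.+1)).
  rewrite -!big_split; apply: eq_big_nat => j /andP[j1 _].
  by rewrite dH_pcons // intS /=; ring.
rewrite (ellH_from Pb bN) [\sum_(1 <= k < N.+2) delta _ k]big_nat_recl //.
rewrite [\sum_(1 <= k < N.+2) (_ * _)]big_nat_recl // sum_delta sum_dH.
by rewrite sum_weighted_telescope delta_end; ring.
Qed.

Lemma ell_pcons : ell (pcons c b) = ell b + dist c (b 1%N).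
Proof.
by rewrite /ell ellH_pcons -(H_head_dist c_le3 (b_le3 1)) /dH /delta /g /=; ring.
Qed.

Lemma absb_pcons : absb (pcons c b) = absb b + ell b + dist c (b 1%N).
Proof.
by rewrite absb_pcons_ellH /ell -(H_head_dist c_le3 (b_le3 1)) /dH /delta /g /=; ring.
Qed.
End Prepend.

Lemma dist_ge0 c c' : 0 <= dist c c'.
Proof. exact: normr_ge0. Qed.

Lemma dist_gt0 c c' : c <> c' -> 0 < dist c c'.
Proof. by move=> neq_cc'; rewrite /dist normr_gt0 subr_eq0 eqz_nat; apply/eqP. Qed.

(* Along [pcons c b], the support moves one place to the right while [absb]
   grows by [ell b + dist c (b 1)], which is positive unless [b] is the ground
   state and [c = 3]. *)
Lemma path_support b : inP b ->
  [/\ 0 <= ell b, 0 <= absb b & forall k, b k <> g k -> 0 < ell b /\ k%:Z <= absb b].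
Proof.
move: b; apply: inP_ind => [|c {}b c3 Pb [ell0 absb0 supp]].
  by rewrite ell_g absb_g; split=> // k [].
have d0 := dist_ge0 c (b 1%N); rewrite ell_pcons // absb_pcons //.
split; [lia | lia | case=> [//|[|j]] /= bk].
  have [b1|/eqP/supp] := eqVneq (b 1%N) (g 1%N); last lia.
  by have := dist_gt0 bk; rewrite -b1; lia.
have /supp : b j.+1 <> g j.+1.
  by move=> bj; apply: bk; rewrite g_succ bj.
lia.
Qed.

Lemma agrees_from_absb b : inP b -> agrees_from `|absb b|%N.+1 b.
Proof.
move=> Pb k Nk; have [_ _ supp] := path_support Pb.
by apply/eqP/negPn/negP => /eqP /supp; lia.
Qed.

Definition extend N (f : {ffun 'I_N.+1 -> 'I_4}) (k : nat) : nat :=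
  if (0 < k <= N)%N then nat_of_ord (f (inord k)) else g k.

Lemma finite_agrees N : finite_set [set b | inP b /\ agrees_from N.+1 b].
Proof.
apply: sub_finite_set (finite_image (@extend N) (@finite_finset _ setT)).
move=> b [[b3 [b0 _]] bN]; exists [ffun i : 'I_N.+1 => inord (b i) : 'I_4] => //.
apply: funext => k; rewrite /extend; case: ifP => [/andP[k0 kN]|].
  by rewrite ffunE inordK ?ltnS // inordK // ltnS.
case: k => [_|k /negbT]; first by rewrite b0.
by rewrite -ltnNge => Nk; rewrite bN.
Qed.

Lemma finite_Sset m n : finite_set (Sset m n).
Proof.
apply: sub_finite_set (finite_agrees `|n|%N) => b [Pb [_ <-]].
by split=> //; exact: agrees_from_absb.
Qed.

Lemma card_fset_set_split (T : choiceType) (A F : set T) : finite_set A ->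
  #|` fset_set A| = (#|` fset_set (A `&` F)| + #|` fset_set (A `\` F)|)%N.
Proof.
move=> finA.
have finI : finite_set (A `&` F) := sub_finite_set (@subIsetl _ A F) finA.
have finD : finite_set (A `\` F) := sub_finite_set (@subDsetl _ A F) finA.
rewrite -{1}(setUIDK A F) fset_setU // cardfsU -fset_setI //.
suff -> : A `&` F `&` (A `\` F) = set0 by rewrite fset_set0 cardfs0 subn0.
by apply/seteqP; split=> x // [[_ Fx] [_ nFx]].
Qed.

Lemma card_fset_set_fibers (T : choiceType) (f : T -> nat) (s : seq nat) (A : set T) :
  uniq s -> finite_set A -> A `<=` [set x | f x \in s] ->
  #|` fset_set A| = (\sum_(i <- s) #|` fset_set (A `&` [set x | f x = i])|)%N.
Proof.
elim: s A => [|i s IH] A.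
  move=> _ _ sA; rewrite big_nil (_ : A = set0) ?fset_set0 ?cardfs0 //.
  by apply/seteqP; split=> x // /sA.
move=> /andP[i_s s_uniq] finA sA.
rewrite big_cons (card_fset_set_split [set x | f x = i] finA); congr (_ + _)%N.
rewrite IH //; last 2 first.
- exact: sub_finite_set (@subDsetl _ _ _) finA.
- by move=> x [/sA /=]; rewrite in_cons => /orP[/eqP|].
apply: eq_big_seq => j js; congr #|` fset_set _|.
apply/seteqP; split=> x /=; first by case=> -[].
by case=> Ax fj; split=> //; split=> // fi; rewrite -fi fj js in i_s.
Qed.

Lemma card_fset_set_inj_image (T U : choiceType) (f : T -> U) (A : set T) :
  finite_set A -> (forall x y, A x -> A y -> f x = f y -> x = y) ->
  #|` fset_set (f @` A)| = #|` fset_set A|.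
Proof.
move=> finA injf; rewrite fset_set_image // card_in_imfset // => x y.
by rewrite !in_fset_set // => /set_mem Ax /set_mem Ay; apply: injf.
Qed.

Definition Sfirst (c : nat) (m n : int) : set (nat -> nat) :=
  Sset m n `&` [set b | b 1%N = c].

Definition Jfirst (c : nat) (m n : int) : int := (#|` fset_set (Sfirst c m n)|)%:Z.

Lemma Jcoef_first m n : Jcoef m n = \sum_(0 <= c < 4) Jfirst c m n.
Proof.
rewrite /Jcoef (@card_fset_set_fibers _ (fun b => b 1%N) (iota 0 4)) //.
- by rewrite -natz natr_sum; apply: eq_bigr => c _; rewrite natz.
- exact: finite_Sset.
- by move=> b [[b3 _] _]; rewrite /mkset mem_iota ltnS b3.
Qed.

Lemma Jfirst_rec c m n : (c <= 3)%N ->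
  Jfirst c m n = \sum_(0 <= c' < 4) Jfirst c' (m - dist c c') (n - m).
Proof.
move=> c3.
pose T := [set b | inP b /\ ell b = m - dist c (b 1%N) /\ absb b = n - m].
have finS : finite_set (Sfirst c m n) := sub_finite_set (@subIsetl _ _ _) (finite_Sset m n).
have ptail_inj x y : Sfirst c m n x -> Sfirst c m n y -> ptail x = ptail y -> x = y.
  by move=> [[Px _] x1] [[Py _] y1] xy; rewrite -(pconsK Px) -(pconsK Py) x1 y1 xy.
have ptailS : ptail @` Sfirst c m n = T.
  rewrite /T; apply/seteqP; split=> b.
    case=> x [[Px [<- <-]] x1] <-; have Pt := ptail_inP Px.
    have := ell_pcons c3 Pt; have := absb_pcons c3 Pt.
    by rewrite -x1 pconsK // => -> ->; split=> //; split; ring.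
  move=> [Pb [el ab]]; exists (pcons c b); last exact: ptailK.
  by split=> //; split; [exact: pcons_inP | rewrite ell_pcons // absb_pcons //; split; lia].
rewrite /Jfirst -(@card_fset_set_inj_image _ _ ptail _ finS ptail_inj) ptailS.
rewrite (@card_fset_set_fibers _ (fun b => b 1%N) (iota 0 4)) //.
- rewrite -natz natr_sum; apply: eq_bigr => c' _; rewrite natz; congr (Posz #|` fset_set _|).
  by apply/seteqP; split=> b /= [[Pb [el ab]] b1]; rewrite -b1 in el *.
- by rewrite -ptailS; exact: finite_image.
- by move=> b [[b3 _] _]; rewrite /mkset mem_iota ltnS b3.
Qed.

Definition mono (i j : int) : lpoly := [:: (1, i, j)].

Definition lneg (p : lpoly) : lpoly := [seq (- t.1.1, t.1.2, t.2) | t <- p].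

Fixpoint linsert (t : int * int * int) (p : lpoly) : lpoly :=
  if p is u :: p' then
    if (u.1.2 == t.1.2) && (u.2 == t.2) then (u.1.1 + t.1.1, u.1.2, u.2) :: p'
    else u :: linsert t p'
  else [:: t].

Definition lnorm (p : lpoly) : lpoly := foldr linsert [::] p.

Definition lzero (p : lpoly) : bool := all (fun t => t.1.1 == 0) (lnorm p).

Section Action.
Variable F : int -> int -> int.

Lemma act_cat p r m n : act (p ++ r) F m n = act p F m n + act r F m n.
Proof. exact: big_cat. Qed.

Lemma act_lneg p m n : act (lneg p) F m n = - act p F m n.
Proof. by rewrite /act big_map -sumrN; apply: eq_bigr => t _; rewrite mulNr. Qed.

Lemma act_mono i j m n : act (mono i j) F m n = F (m - i) (n - j).
Proof. by rewrite /act big_seq1 mul1r. Qed.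

Lemma act_lmul p r m n : act (lmul p r) F m n = act p (act r F) m n.
Proof.
rewrite /act /lmul big_allpairs_dep /=; apply: eq_bigr => u _; rewrite mulr_sumr.
by apply: eq_bigr => v _; rewrite mulrA !opprD !addrA.
Qed.

Lemma act_flatten (I : Type) (s : seq I) (f : I -> lpoly) m n :
  act (flatten [seq f i | i <- s]) F m n = \sum_(i <- s) act (f i) F m n.
Proof. by rewrite /act big_flatten big_map. Qed.

Lemma act_nil m n : act [::] F m n = 0.
Proof. exact: big_nil. Qed.

Lemma act_cons u p m n :
  act (u :: p) F m n = u.1.1 * F (m - u.1.2) (n - u.2) + act p F m n.
Proof. exact: big_cons. Qed.

Lemma act_linsert t p m n :
  act (linsert t p) F m n = t.1.1 * F (m - t.1.2) (n - t.2) + act p F m n.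
Proof.
elim: p => [|u p IH] /=; first by rewrite act_cons.
case: andP => [[/eqP ex /eqP ey]|_].
  by rewrite !act_cons /= -ex -ey; ring.
by rewrite !act_cons IH; ring.
Qed.

Lemma act_lnorm p m n : act (lnorm p) F m n = act p F m n.
Proof. by elim: p => [|t p IH] //=; rewrite act_linsert IH act_cons. Qed.

Lemma act_lzero p m n : lzero p -> act p F m n = 0.
Proof.
rewrite /lzero -(act_lnorm p m n); elim: (lnorm p) => [|t r IH] /=.
  by rewrite act_nil.
by case/andP=> /eqP t0 /IH; rewrite act_cons t0 mul0r add0r.
Qed.
End Action.

Lemma act_sum (I : Type) (s : seq I) (G : I -> int -> int -> int) p m n :
  act p (fun m' n' => \sum_(i <- s) G i m' n') m n = \sum_(i <- s) act p (G i) m n.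
Proof.
by rewrite /act; under eq_bigr do rewrite mulr_sumr; exact: exchange_big.
Qed.

Lemma act_expand (I : Type) (s : seq I) (W : I -> lpoly) (G : I -> int -> int -> int)
    (F : int -> int -> int) p m n :
  (forall m' n', F m' n' = \sum_(i <- s) act (W i) (G i) m' n') ->
  act p F m n = \sum_(i <- s) act (lmul p (W i)) (G i) m n.
Proof.
move=> FE; rewrite (_ : F = fun m' n' => \sum_(i <- s) act (W i) (G i) m' n').
  by rewrite act_sum; apply: eq_bigr => i _; rewrite act_lmul.
by apply: funext => m'; apply: funext => n'; exact: FE.
Qed.

(* Coefficients of [J_e(x q^2, q)], where [J_e] is the part of [J] with first letter [e]. *)
Definition Gfirst (e : nat) (m n : int) : int := Jfirst e m (n - 2 * m).

Definition W1 (e : nat) : lpoly :=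
  flatten [seq mono (dist c e) (2 * dist c e) | c <- iota 0 4].

Definition W0 (e : nat) : lpoly :=
  flatten [seq flatten [seq lmul (mono (dist c c') (dist c c'))
                                 (mono (dist c' e) (2 * dist c' e)) | c' <- iota 0 4]
          | c <- iota 0 4].

Lemma Jfirst_shift c m n : (c <= 3)%N ->
  Jfirst c m (n - m) = \sum_(0 <= e < 4) act (mono (dist c e) (2 * dist c e)) (Gfirst e) m n.
Proof.
move=> c3; rewrite Jfirst_rec //; apply: eq_bigr => e _.
by rewrite act_mono /Gfirst; congr Jfirst; ring.
Qed.

Lemma Jsub2_expand m n : Jsub 2 m n = \sum_(0 <= e < 4) act (mono 0 0) (Gfirst e) m n.
Proof. by rewrite /Jsub Jcoef_first; apply: eq_bigr => e _; rewrite act_mono !subr0. Qed.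

Lemma Jsub1_expand m n : Jsub 1 m n = \sum_(0 <= e < 4) act (W1 e) (Gfirst e) m n.
Proof.
rewrite /Jsub mul1r Jcoef_first.
under eq_big_nat => c /andP[_ c4] do rewrite Jfirst_shift //.
by rewrite exchange_big; apply: eq_bigr => e _; rewrite act_flatten.
Qed.

Lemma Jsub0_expand m n : Jsub 0 m n = \sum_(0 <= e < 4) act (W0 e) (Gfirst e) m n.
Proof.
rewrite /Jsub mul0r subr0 Jcoef_first.
transitivity (\sum_(0 <= c < 4) \sum_(0 <= c' < 4) \sum_(0 <= e < 4)
  act (lmul (mono (dist c c') (dist c c')) (mono (dist c' e) (2 * dist c' e))) (Gfirst e) m n).
  apply: eq_big_nat => c /andP[_ c4]; rewrite Jfirst_rec //.
  apply: eq_big_nat => c' /andP[_ c'4].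
  rewrite (_ : n - m = n - dist c c' - (m - dist c c')); last by ring.
  by rewrite Jfirst_shift //; apply: eq_bigr => e _; rewrite act_lmul [RHS]act_mono.
under eq_bigr do rewrite exchange_big; rewrite exchange_big.
by apply: eq_bigr => e _; rewrite act_flatten; apply: eq_bigr => c _; rewrite act_flatten.
Qed.

(* The coefficient of [J_e(x q^2, q)] in
   [q J(x, q) - (1+xq)(1+q-xq+x^2q^3) J(x q, q) + (1+xq^2)(1-x^2q^2) J(x q^2, q)]. *)
Definition Jrelation (e : nat) : lpoly :=
  lmul P_q (W0 e) ++ lneg (lmul (lmul P_1xq P_2) (W1 e))
  ++ lmul (lmul P_1xq2 P_1mx2q2) (mono 0 0).

Lemma Jrelation_vanishes : all (fun e => lzero (Jrelation e)) (iota 0 4).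
Proof. by vm_compute. Qed.

Lemma J_functional_equation m n :
  act P_q (Jsub 0) m n =
  act (lmul P_1xq P_2) (Jsub 1) m n - act (lmul P_1xq2 P_1mx2q2) (Jsub 2) m n.
Proof.
have Jrelation_act e : act (Jrelation e) (Gfirst e) m n =
    act (lmul P_q (W0 e)) (Gfirst e) m n - act (lmul (lmul P_1xq P_2) (W1 e)) (Gfirst e) m n
    + act (lmul (lmul P_1xq2 P_1mx2q2) (mono 0 0)) (Gfirst e) m n.
  by rewrite /Jrelation (act_cat _ (lmul P_q _)) (act_cat _ (lneg _)) act_lneg addrA.
have : \sum_(0 <= e < 4) act (Jrelation e) (Gfirst e) m n = 0.
  by rewrite big1_seq // => e e4; apply: act_lzero; apply: (allP Jrelation_vanishes).
under eq_bigr do rewrite Jrelation_act.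
rewrite !big_split sumrN (act_expand _ _ _ Jsub0_expand).
rewrite (act_expand _ _ _ Jsub1_expand) (act_expand _ _ _ Jsub2_expand).
by move/eqP; rewrite addr_eq0 subr_eq addrC => /eqP.
Qed.

Theorem mainTheorem4 :
  (forall m n : int, finite_set (Sset m n)) /\
  (forall m n : int,
     act P_q (Jsub 0) m n =
     act (lmul P_1xq P_2) (Jsub 1) m n - act (lmul P_1xq2 P_1mx2q2) (Jsub 2) m n).
Proof. split; [exact: finite_Sset | exact: J_functional_equation]. Qed.
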